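(* Let $q$ be an odd prime power, $p$ its characteristic, $d\ge2$ an integer and $t\in\mathbb{F}_q^{\times}$. Let $\omega$ be a generator of the group of multiplicative characters of $\mathbb{F}_q^{\times}$, $\phi$ the unique character of order $2$, $\zeta_p$ a primitive $p$-th root of unity, and for a character $\chi$ let $g_q(\chi)=\sum_{x\in\mathbb{F}_q^{\times}}\chi(x)\zeta_p^{\mathrm{tr}(x)}$, where $\mathrm{tr}:\mathbb{F}_q\to\mathbb{F}_p$ is the trace. Define $$H_q(t)=\frac{(-1)^d}{1-q}\sum_{m=0}^{q-2}\left(\frac{g_q(\phi\omega^m)\,g_q(\omega^{-m})}{g_q(\phi)}\right)^d\omega\big((-1)^dt\big)^m.$$ Then the number of points $(x_1,\dots,x_d)\in(\mathbb{F}_q^{\times})^d$ on the hypersurface $$X_t:\ \prod_{i=1}^d\left(x_i+2+x_i^{-1}\right)=4^d t^{-1}$$ equals $$\frac{(q-2)^d-(-1)^d}{q-1}-(-1)^dH_q(t).$$ *)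

From HB Require Import structures.
From mathcomp Require Import all_boot all_order all_algebra all_field.
Set Implicit Arguments. Unset Strict Implicit. Unset Printing Implicit Defensive.
Import Order.TTheory GRing.Theory Num.Theory.
Local Open Scope ring_scope.

(* A multiplicative character of F^x, valued in algC; values at 0 are
   irrelevant (never used). *)
Definition mult_char (F : finFieldType) (chi : F -> algC) : Prop :=
  chi 1 = 1 /\ forall x y : F, x != 0 -> y != 0 -> chi (x * y) = chi x * chi y.

Definition char_generator (F : finFieldType) (omega : F -> algC) : Prop :=
  mult_char omega /\
  forall chi : F -> algC, mult_char chi ->
    exists m : nat, forall x : F, x != 0 -> chi x = omega x ^+ m.

Definition order2_char (F : finFieldType) (phi : F -> algC) : Prop :=
  mult_char phi /\ (exists x : F, x != 0 /\ phi x != 1) /\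
  forall x : F, x != 0 -> phi x ^+ 2 = 1.

Definition abs_trace (F : finFieldType) (p : nat) (x : F) : F :=
  \sum_(i < logn p #|F|) x ^+ (p ^ i).

Definition trace_nat (F : finFieldType) (p : nat) (x : F) : nat :=
  odflt 0%N (omap (@nat_of_ord p) [pick k : 'I_p | (k%:R : F) == abs_trace p x]).

Definition gauss_sum (F : finFieldType) (p : nat) (zeta : algC)
    (chi : F -> algC) : algC :=
  \sum_(x : F | x != 0) chi x * zeta ^+ trace_nat p x.

Definition Hq (F : finFieldType) (p : nat) (zeta : algC) (omega phi : F -> algC)
    (d : nat) (t : F) : algC :=
  let q := #|F| in
  (-1) ^+ d / (1 - q%:R) *
  \sum_(m < q.-1)
    ((gauss_sum p zeta (fun x => phi x * omega x ^+ m) *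
      gauss_sum p zeta (fun x => (omega x ^+ m)^-1)) /
      gauss_sum p zeta phi) ^+ d *
    omega ((-1) ^+ d * t) ^+ m.

Definition Xt_points (F : finFieldType) (d : nat) (t : F) : {set {ffun 'I_d -> F}} :=
  [set x : {ffun 'I_d -> F} | [forall i, x i != 0] &&
     (\prod_(i < d) (x i + 2 + (x i)^-1) == 4 ^+ d * t^-1)].

From HB Require Import structures.
From mathcomp Require Import all_boot all_order all_algebra all_field.
From mathcomp Require Import cyclic ring.
Set Implicit Arguments. Unset Strict Implicit. Unset Printing Implicit Defensive.
Import Order.TTheory GRing.Theory Num.Theory.
Local Open Scope ring_scope.

(* Write f(y) = y + 2 + 1/y, so that X_t is the equation prod_i f(x_i) = b with
   b = 4^d / t.  Detecting it with the q - 1 characters omega^m of F^x gives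
     #X_t = (q - 1)^-1 sum_m omega(b)^-m S_m^d,   S_m = sum_(y, f(y) <> 0) omega(f(y))^m.
   As (2y + 2 - u)^2 = u(u - 4) exactly when y <> 0 and f(y) = u, the fibre of f
   over u <> 0 has 1 + phi(u(u - 4)) points (one point if u = 4); summing against
   omega^m and substituting u = -4/v yields
     S_m = (q - 1) [m = 0] + omega(-4)^m K_m,   K_m = sum_(v <> 0, -1) omega(v)^-m phi(1 + v),
   with K_0 = -1.  Expanding the product of Gauss sums and evaluating the inner
   sums of the additive character gives g(phi omega^m) g(omega^-m) = g(phi) K_m,
   which identifies the terms m <> 0 with H_q(t). *)

Lemma fixed_scale_eq0 (R : idomainType) (c x : R) : c != 1 -> x = c * x -> x = 0.
Proof.
move=> c1 /eqP; rewrite -subr_eq0 -{1}(mul1r x) -mulrBl mulf_eq0 subr_eq0 eq_sym.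
by rewrite (negbTE c1) => /eqP.
Qed.

Lemma size_trace_poly (R : nzRingType) (p k : nat) : (1 < p)%N ->
  size (\sum_(i < k.+1) 'X^(p ^ i) : {poly R}) = (p ^ k).+1.
Proof.
move=> p_gt1; elim: k => [|k IHk]; first by rewrite big_ord1 expn0 size_polyX.
rewrite big_ord_recr /= addrC size_polyDl ?size_polyXn // IHk ltnS.
by rewrite ltn_exp2l.
Qed.

Section PrimeCharacteristic.

Variables (F : finFieldType) (p : nat).
Hypothesis pF : p \in [pchar F].

Lemma card_finField_pchar : #|F| = (p ^ logn p #|F|)%N.
Proof. exact: card_pprimeChar pF. Qed.

Lemma logn_card_gt0 : (0 < logn p #|F|)%N.
Proof.
rewrite lt0n; apply: contraTneq (finNzRing_gt1 F) => n0.
by rewrite card_finField_pchar n0.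
Qed.

Lemma natf_eq_mod (a b : nat) : ((a%:R : F) == b%:R) = (a == b %[mod p])%N.
Proof.
wlog le_ba : a b / (b <= a)%N.
  move=> W; case: (leqP b a) => [/W //|/ltnW /W].
  by rewrite eq_sym => ->; rewrite eq_sym.
by rewrite eqn_mod_dvd // (dvdn_pcharf pF) natrB // subr_eq0.
Qed.

Lemma frobenius_fixed_natr (y : F) : y ^+ p = y -> exists k : 'I_p, y = k%:R.
Proof.
move=> yp; have p_gt1 := prime_gt1 (pcharf_prime pF).
have [k /eqP <-|y_new] := pickP [pred k : 'I_p | k%:R == y]; first by exists k.
pose P : {poly F} := 'X^p - 'X.
have P_size : size P = p.+1.
  by rewrite size_polyDl ?size_polyXn // size_polyN size_polyX.
have P_neq0 : P != 0 by rewrite -size_poly_eq0 P_size.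
pose rs := y :: [seq (val k)%:R | k <- enum 'I_p].
have rs_roots : all (root P) rs.
  apply/allP => z /predU1P [->|/mapP [k _ ->]]; rewrite rootE !hornerE ?yp ?subrr //.
  by rewrite -(pFrobenius_autE pF) pFrobenius_aut_nat subrr.
have rs_uniq : uniq rs.
  rewrite /= map_inj_uniq ?enum_uniq ?andbT.
    by apply/mapP => -[k _ yk]; have := y_new k; rewrite /= yk eqxx.
  by move=> i j /eqP; rewrite natf_eq_mod !modn_small // => /eqP /val_inj.
have := max_poly_roots P_neq0 rs_roots rs_uniq.
by rewrite P_size /= size_map size_enum_ord ltnn.
Qed.

Lemma abs_traceD (x y : F) : abs_trace p (x + y) = abs_trace p x + abs_trace p y.
Proof.
rewrite /abs_trace -big_split; apply: eq_bigr => i _; apply: exprDn_pchar.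
by rewrite (eq_pnat _ (pcharf_eq pF)) pnatX pnat_id ?(pcharf_prime pF).
Qed.

Lemma abs_trace0 : abs_trace p (0 : F) = 0.
Proof. by apply: (addrI (abs_trace p 0)); rewrite -abs_traceD !addr0. Qed.

Lemma abs_trace_frobenius (x : F) : abs_trace p x ^+ p = abs_trace p x.
Proof.
rewrite /abs_trace -(pFrobenius_autE pF) rmorph_sum /=.
move: card_finField_pchar logn_card_gt0; case: (logn p #|F|) => // n card_F _.
rewrite big_ord_recr big_ord_recl /= expn0 expr1 addrC.
rewrite (pFrobenius_autE pF) -exprM -expnSr -card_F expf_card; congr (_ + _).
by apply: eq_bigr => i _; rewrite (pFrobenius_autE pF) -exprM -expnSr.
Qed.

Lemma trace_natE (x : F) : (trace_nat p x)%:R = abs_trace p x.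
Proof.
rewrite /trace_nat; case: pickP => [k /eqP //|no_k].
have [k trk] := frobenius_fixed_natr (abs_trace_frobenius x).
by have := no_k k; rewrite trk eqxx.
Qed.

Lemma abs_trace_neq0 : exists x : F, abs_trace p x != 0.
Proof.
have [x|trace0] := pickP [pred x : F | abs_trace p x != 0]; first by exists x.
have p_gt1 := prime_gt1 (pcharf_prime pF).
move: trace0 card_finField_pchar logn_card_gt0; rewrite /abs_trace.
case: (logn p #|F|) => // k trace0 card_F _.
pose T : {poly F} := \sum_(i < k.+1) 'X^(p ^ i).
have T_neq0 : T != 0 by rewrite -size_poly_eq0 size_trace_poly.
have T_roots : all (root T) (enum F).
  apply/allP => x _; rewrite rootE horner_sum.
  by under eq_bigr do rewrite hornerXn; apply/negbFE/trace0.
have := max_poly_roots T_neq0 T_roots (enum_uniq _).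
by rewrite size_trace_poly // -cardE card_F ltnS leqNgt ltn_exp2l // ltnSn.
Qed.

End PrimeCharacteristic.

Section FiniteField.

Variable F : finFieldType.

Lemma card_finField_pred_gt0 : (0 < #|F|.-1)%N.
Proof. by rewrite -ltnS (ltn_predK (finNzRing_gt1 F)) finNzRing_gt1. Qed.

Lemma expr0_card_pred (R : nzRingType) : (0 : R) ^+ #|F|.-1 = 0.
Proof. by rewrite expr0n gtn_eqF ?card_finField_pred_gt0. Qed.

Lemma card_finField_nonzero : #|[pred x : F | x != 0]| = #|F|.-1.
Proof. by rewrite -(cardC1 (0 : F)); apply: eq_card. Qed.

Lemma natr_card_pred (R : nzRingType) : (#|F|.-1%:R : R) = #|F|%:R - 1.
Proof. by rewrite -[in RHS](ltn_predK (finNzRing_gt1 F)) -natr1 addrK. Qed.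

Lemma expf_card_pred (x : F) : x != 0 -> x ^+ #|F|.-1 = 1.
Proof.
move=> x0; apply: (mulfI x0).
by rewrite mulr1 -exprS (ltn_predK (finNzRing_gt1 F)) expf_card.
Qed.

Lemma odd_card_two_neq0 : odd #|F| -> (2 : F) != 0.
Proof.
apply: contraL => two0; have pF2 : 2 \in [pchar F] by rewrite inE two0.
rewrite (card_finField_pchar pF2) oddX negb_or /= andbT -lt0n.
exact: logn_card_gt0 pF2.
Qed.

Lemma finField_prim_root_exists : exists g : F, (#|F|.-1).-primitive_root g.
Proof.
have [||||g _ g_prim] := hasP (@has_prim_root F #|F|.-1 (enum [pred x : F | x != 0]) _ _ _ _).
- exact: card_finField_pred_gt0.
- by apply/allP => x; rewrite mem_enum => x0; rewrite unity_rootE expf_card_pred.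
- exact: enum_uniq.
- by rewrite -cardE card_finField_nonzero.
by exists g.
Qed.

Lemma prim_root_card_neq0 (g : F) : (#|F|.-1).-primitive_root g -> g != 0.
Proof.
move=> g_prim; apply: contraPneq (prim_expr_order g_prim) => ->.
by rewrite expr0_card_pred => /esym/eqP; rewrite oner_eq0.
Qed.

Definition dlog (g x : F) : nat :=
  odflt 0%N (omap val [pick i : 'I_#|F|.-1 | g ^+ i == x]).

Lemma dlogK (g x : F) : (#|F|.-1).-primitive_root g -> x != 0 -> g ^+ dlog g x = x.
Proof.
move=> g_prim x0; rewrite /dlog; case: pickP => [i /eqP //|no_i].
have [i gi] := prim_rootP g_prim (expf_card_pred x0).
by have := no_i i; rewrite gi eqxx.
Qed.

End FiniteField.

Section MultiplicativeCharacter.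

Variables (F : finFieldType) (chi : F -> algC).
Hypothesis chiM : mult_char chi.

Lemma mult_char1 : chi 1 = 1.
Proof. by case: chiM. Qed.

Lemma mult_charM (x y : F) : x != 0 -> y != 0 -> chi (x * y) = chi x * chi y.
Proof. by case: chiM => _; apply. Qed.

Lemma mult_charX (x : F) (k : nat) : x != 0 -> chi (x ^+ k) = chi x ^+ k.
Proof.
move=> x0; elim: k => [|k IHk]; first by rewrite !expr0 mult_char1.
by rewrite !exprS mult_charM ?IHk // expf_neq0.
Qed.

Lemma mult_char_unity (x : F) : x != 0 -> chi x ^+ #|F|.-1 = 1.
Proof. by move=> x0; rewrite -mult_charX // expf_card_pred // mult_char1. Qed.

Lemma mult_char_neq0 (x : F) : x != 0 -> chi x != 0.
Proof.
move=> x0; apply: contraPneq (mult_char_unity x0) => ->.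
by rewrite expr0_card_pred => /esym/eqP; rewrite oner_eq0.
Qed.

Lemma mult_charV (x : F) : x != 0 -> chi x^-1 = (chi x)^-1.
Proof.
move=> x0; apply: (mulfI (mult_char_neq0 x0)).
by rewrite -mult_charM ?invr_eq0 // !divff ?mult_char_neq0 // mult_char1.
Qed.

Lemma mult_char_prod (I : finType) (a : I -> F) :
  (forall i, a i != 0) -> chi (\prod_i a i) = \prod_i chi (a i).
Proof.
move=> a0; suff [] : \prod_i a i != 0 /\ chi (\prod_i a i) = \prod_i chi (a i) by [].
elim/big_rec2: _ => [|i y z _ [y0 <-]]; first by rewrite oner_neq0 mult_char1.
by rewrite mulf_neq0 // mult_charM.
Qed.

Lemma sum_mult_char_eq0 (a : F) :
  a != 0 -> chi a != 1 -> \sum_(u : F | u != 0) chi u = 0.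
Proof.
move=> a0 chia; apply: (fixed_scale_eq0 chia); set S := \sum_(u | u != 0) _.
rewrite {1}/S (reindex_inj (mulfI a0)) mulr_sumr /=.
rewrite (eq_bigl (fun u => u != 0)) => [|u]; last by rewrite mulf_eq0 (negbTE a0).
by apply: eq_bigr => u u0; rewrite mult_charM.
Qed.

End MultiplicativeCharacter.

Lemma mult_char_one (F : finFieldType) : mult_char (fun _ : F => 1).
Proof. by split=> // *; rewrite mulr1. Qed.

Lemma mult_char_exp (F : finFieldType) (chi : F -> algC) (m : nat) :
  mult_char chi -> mult_char (fun x => chi x ^+ m).
Proof.
by move=> chiM; split=> [|x y x0 y0]; rewrite ?mult_char1 ?expr1n // mult_charM // exprMn.
Qed.

Lemma mult_char_inv (F : finFieldType) (chi : F -> algC) :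
  mult_char chi -> mult_char (fun x => (chi x)^-1).
Proof.
by move=> chiM; split=> [|x y x0 y0]; rewrite ?mult_char1 ?invr1 // mult_charM // invfM.
Qed.

Lemma faithful_mult_char_exists (F : finFieldType) :
  exists chi : F -> algC, mult_char chi /\ forall x, x != 0 -> chi x = 1 -> x = 1.
Proof.
have [g g_prim] := finField_prim_root_exists F.
have [e e_prim] := C_prim_root_exists (card_finField_pred_gt0 F).
have dlogE x k : x != 0 -> (e ^+ dlog g x == e ^+ k) = (x == g ^+ k).
  by move=> x0; rewrite (eq_prim_root_expr e_prim) -(eq_prim_root_expr g_prim) dlogK.
exists (fun x => e ^+ dlog g x); split; first split.
- by apply/eqP; rewrite -(expr0 e) dlogE ?expr0 ?oner_neq0.
- move=> x y x0 y0; apply/eqP.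
  by rewrite -exprD dlogE ?mulf_neq0 // exprD !dlogK.
- by move=> x x0 /eqP; rewrite -(expr0 e) dlogE // expr0 => /eqP.
Qed.

Section CharGenerator.

Variables (F : finFieldType) (omega : F -> algC).
Hypothesis omega_gen : char_generator omega.

Lemma char_generator_mult : mult_char omega.
Proof. by case: omega_gen. Qed.

Lemma char_generator_faithful (x : F) : x != 0 -> omega x = 1 -> x = 1.
Proof.
move=> x0 omega_x; have [chi [chiM chi_faithful]] := faithful_mult_char_exists F.
have [m chiE] := omega_gen.2 chi chiM.
by apply: chi_faithful; rewrite // chiE // omega_x expr1n.
Qed.

Lemma sum_char_generator_exp (a : F) : a != 0 ->
  \sum_(m < #|F|.-1) omega a ^+ m = (a == 1)%:R * #|F|.-1%:R.
Proof.
move=> a0; have [->|a1] := eqVneq a 1.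
  rewrite (mult_char1 char_generator_mult).
  by under eq_bigr do rewrite expr1n; rewrite sumr_const card_ord mul1r.
have omega_a : omega a != 1.
  by apply: contra_neq a1; apply: char_generator_faithful.
rewrite mul0r; apply/eqP; have := subrX1 (omega a) #|F|.-1.
rewrite (mult_char_unity char_generator_mult a0) subrr => /esym/eqP.
by rewrite mulf_eq0 subr_eq0 (negbTE omega_a).
Qed.

Lemma sum_char_generator_units (m : nat) : (m < #|F|.-1)%N ->
  \sum_(u : F | u != 0) omega u ^+ m = (m == 0)%N%:R * #|F|.-1%:R.
Proof.
move=> m_lt; have [->|m0] := eqVneq m 0%N.
  under eq_bigr do rewrite expr0.
  by rewrite sumr_const card_finField_nonzero mul1r.
have [g g_prim] := finField_prim_root_exists F.
have g0 := prim_root_card_neq0 g_prim.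
have omegaM := mult_char_exp m char_generator_mult.
rewrite mul0r (sum_mult_char_eq0 omegaM g0) //=.
rewrite -(mult_charX char_generator_mult _ g0).
apply: contra_neq m0 => /(char_generator_faithful (expf_neq0 _ g0)) /eqP.
by rewrite -(expr0 g) (eq_prim_root_expr g_prim) mod0n modn_small // => /eqP.
Qed.

End CharGenerator.

Section QuadraticCharacter.

Variables (F : finFieldType) (phi : F -> algC).
Hypothesis phi2 : order2_char phi.

Lemma quad_char_mult : mult_char phi.
Proof. by case: phi2. Qed.

Lemma quad_char_sign (x : F) : x != 0 -> phi x = 1 \/ phi x = -1.
Proof.
case: phi2 => _ [_ phi_sqr] /phi_sqr /eqP.
by rewrite -subr_eq0 subr_sqr_1 mulf_eq0 subr_eq0 addr_eq0 => /orP [] /eqP; [left|right].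
Qed.

Lemma quad_char_invr (x : F) : x != 0 -> (phi x)^-1 = phi x.
Proof. by case/quad_char_sign => ->; rewrite ?invrN invr1. Qed.

Lemma quad_char_sqr (x : F) : x != 0 -> phi (x ^+ 2) = 1.
Proof. by case: phi2 => phiM [_ phi_sqr] x0; rewrite mult_charX // phi_sqr. Qed.

Lemma sum_quad_char : \sum_(u : F | u != 0) phi u = 0.
Proof. by case: phi2 => phiM [[a [a0 phi_a]] _]; apply: (sum_mult_char_eq0 phiM a0 phi_a). Qed.

Lemma quad_char_nonsquare (D : F) :
  D != 0 -> (forall z : F, z ^+ 2 != D) -> phi D = -1.
Proof.
move=> D0 D_nonsq; have [g g_prim] := finField_prim_root_exists F.
have g0 := prim_root_card_neq0 g_prim.
have phi_g : phi g = -1.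
  case: (quad_char_sign g0) => // phi_g; case: phi2 => _ [[a [a0 /eqP phi_a]] _].
  exfalso; apply: phi_a.
  by rewrite -(dlogK g_prim a0) (mult_charX quad_char_mult) // phi_g expr1n.
rewrite -(dlogK g_prim D0) (mult_charX quad_char_mult) // phi_g -signr_odd.
case: (boolP (odd (dlog g D))) => [_|/negbTE even_dlog]; first by rewrite expr1.
have half_dlog : ((dlog g D)./2 * 2)%N = dlog g D.
  by rewrite muln2 -[RHS]odd_double_half even_dlog.
by have := D_nonsq (g ^+ (dlog g D)./2); rewrite -exprM half_dlog dlogK ?eqxx.
Qed.

Lemma card_sqrt (D : F) : odd #|F| -> D != 0 ->
  (#|[set z : F | z ^+ 2 == D]|%:R : algC) = 1 + phi D.
Proof.
move=> oddF D0; have [w /eqP wD|D_nonsq] := pickP [pred w : F | w ^+ 2 == D]; last first.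
  have -> : [set z : F | z ^+ 2 == D] = set0 by apply/setP => z; rewrite !inE [LHS]D_nonsq.
  by rewrite cards0 quad_char_nonsquare ?subrr // => z; rewrite [_ == _]D_nonsq.
have w0 : w != 0 by apply: contraNneq D0 => w0; rewrite -wD w0 expr0n.
have -> : [set z : F | z ^+ 2 == D] = [set w; - w].
  by apply/setP => z; rewrite !inE -wD eqf_sqr.
rewrite cards2 -wD quad_char_sqr //.
suff -> : w != - w by [].
by rewrite -addr_eq0 -mulr2n -mulr_natr mulf_neq0 ?odd_card_two_neq0.
Qed.

End QuadraticCharacter.

(* omega(-1)^m times the Jacobi sum J(omega^-m, phi). *)
Definition twisted_jacobi_sum (F : finFieldType) (omega phi : F -> algC) (m : nat) : algC :=
  \sum_(v : F | (v != 0) && (v != -1)) (omega v ^+ m)^-1 * phi (1 + v).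

Lemma twisted_jacobi_sum0 (F : finFieldType) (omega phi : F -> algC) :
  order2_char phi -> twisted_jacobi_sum omega phi 0 = -1.
Proof.
move=> phi2; rewrite /twisted_jacobi_sum.
under eq_bigr do rewrite expr0 invr1 mul1r.
rewrite (reindex_inj (h := fun w => w - 1)) /=; last exact: addIr.
rewrite (eq_bigl (fun w => (w != 0) && (w != 1))) => [|w]; last first.
  by rewrite subr_eq0 subr_eq addNr andbC.
under eq_bigr do rewrite addrC subrK.
have := sum_quad_char phi2; rewrite (bigD1 1) ?oner_eq0 //= (mult_char1 (quad_char_mult phi2)).
move/eqP; rewrite addrC addr_eq0 => /eqP <-.
by apply: eq_bigl => w; rewrite andbC.
Qed.

Section GaussSum.

Variables (F : finFieldType) (p : nat) (zeta : algC).
Hypotheses (pF : p \in [pchar F]) (zeta_prim : p.-primitive_root zeta).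

Local Notation psi x := (zeta ^+ trace_nat p x).

Lemma eq_psi (x y : F) : (psi x == psi y) = (abs_trace p x == abs_trace p y).
Proof. by rewrite (eq_prim_root_expr zeta_prim) -(natf_eq_mod pF) !(trace_natE pF). Qed.

Lemma psi0 : psi (0 : F) = 1.
Proof.
apply/eqP; rewrite -(expr0 zeta) (eq_prim_root_expr zeta_prim) -(natf_eq_mod pF).
by rewrite (trace_natE pF) (abs_trace0 pF).
Qed.

Lemma psiD (x y : F) : psi (x + y) = psi x * psi y.
Proof.
apply/eqP; rewrite -exprD (eq_prim_root_expr zeta_prim) -(natf_eq_mod pF).
by rewrite natrD !(trace_natE pF) (abs_traceD pF).
Qed.

Lemma sum_psi : \sum_(x : F) psi x = 0.
Proof.
have [x0 tr_x0] := abs_trace_neq0 pF.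
have psi_x0 : psi x0 != 1 by rewrite -psi0 eq_psi (abs_trace0 pF).
apply: (fixed_scale_eq0 psi_x0); set S := \sum_x _.
rewrite {1}/S (reindex_inj (addrI x0)) mulr_sumr.
by apply: eq_bigr => x _; rewrite psiD.
Qed.

Lemma gauss_sum1 : gauss_sum p zeta (fun _ : F => 1) = -1.
Proof.
have := sum_psi; rewrite (bigD1 0) //= psi0 => /eqP; rewrite addrC addr_eq0 => /eqP <-.
by apply: eq_bigr => x _; rewrite mul1r.
Qed.

Lemma gauss_sum_scale (chi : F -> algC) (c : F) : mult_char chi -> c != 0 ->
  \sum_(x : F | x != 0) chi x * psi (x * c) = (chi c)^-1 * gauss_sum p zeta chi.
Proof.
move=> chiM c0; rewrite /gauss_sum mulr_sumr.
rewrite (reindex_inj (mulIf (invr_neq0 c0))) /=.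
rewrite (eq_bigl (fun x => x != 0)) => [|x]; last by rewrite mulf_eq0 invr_eq0 (negbTE c0) orbF.
apply: eq_bigr => x x0; rewrite mulfVK // (mult_charM chiM) ?invr_neq0 //.
by rewrite (mult_charV chiM c0) mulrCA mulrA.
Qed.

Lemma gauss_sum_mul (chi1 chi2 rho : F -> algC) : mult_char chi2 ->
  (forall x, x != 0 -> chi1 x * chi2 x = rho x) ->
  gauss_sum p zeta chi1 * gauss_sum p zeta chi2 =
  \sum_(v : F | v != 0) chi2 v * \sum_(x : F | x != 0) rho x * psi (x * (1 + v)).
Proof.
move=> chi2M chi12; rewrite /gauss_sum mulr_suml.
transitivity (\sum_(x : F | x != 0) \sum_(v : F | v != 0)
                chi2 v * (rho x * psi (x * (1 + v)))).
  apply: eq_bigr => x x0; rewrite mulr_sumr (reindex_inj (mulfI x0)) /=.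
  rewrite (eq_bigl (fun v => v != 0)) => [|v]; last by rewrite mulf_eq0 (negbTE x0).
  apply: eq_bigr => v v0; rewrite (mult_charM chi2M) // mulrDr mulr1 psiD -chi12 //.
  by ring.
by rewrite exchange_big; apply: eq_bigr => v _; rewrite mulr_sumr.
Qed.

Lemma gauss_sum_quad_sqr (phi : F -> algC) : order2_char phi ->
  gauss_sum p zeta phi * gauss_sum p zeta phi = phi (-1) * #|F|%:R.
Proof.
move=> phi2; have phiM := quad_char_mult phi2.
have m1_neq0 : (-1 : F) != 0 by rewrite oppr_eq0 oner_eq0.
rewrite (gauss_sum_mul (rho := fun _ => 1)) //; last first.
  by case: phi2 => _ [_ phi_sqr] x x0; rewrite -expr2 phi_sqr.
rewrite (bigD1 (-1)) //= subrr.
under eq_bigr do rewrite mulr0 psi0 mulr1.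
rewrite sumr_const card_finField_nonzero.
rewrite (eq_bigr (fun v => - phi v)) => [|v /andP [v0 v1]]; last first.
  rewrite gauss_sum_scale ?invr1 ?mul1r ?gauss_sum1 ?mulrN1 //; first exact: mult_char_one.
  by rewrite addrC addr_eq0.
have := sum_quad_char phi2; rewrite (bigD1 (-1)) //= => /eqP.
rewrite addrC addr_eq0 sumrN => /eqP ->; rewrite opprK.
by rewrite natr_card_pred mulrBr mulr1 subrK.
Qed.

Lemma gauss_sum_quad_neq0 (phi : F -> algC) : order2_char phi ->
  gauss_sum p zeta phi != 0.
Proof.
move=> phi2; have m1_neq0 : (-1 : F) != 0 by rewrite oppr_eq0 oner_eq0.
apply: contraPneq (gauss_sum_quad_sqr phi2) => ->.
rewrite mul0r => /esym/eqP; rewrite mulf_eq0 pnatr_eq0 gtn_eqF ?orbF; last first.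
  exact: ltnW (finNzRing_gt1 F).
by case: (quad_char_sign phi2 m1_neq0) => ->; rewrite ?oppr_eq0 oner_eq0.
Qed.

Lemma gauss_sum_twisted_jacobi (omega phi : F -> algC) (m : nat) :
  mult_char omega -> order2_char phi ->
  gauss_sum p zeta (fun x => phi x * omega x ^+ m) *
  gauss_sum p zeta (fun x => (omega x ^+ m)^-1) =
  gauss_sum p zeta phi * twisted_jacobi_sum omega phi m.
Proof.
move=> omegaM phi2; have phiM := quad_char_mult phi2.
have m1_neq0 : (-1 : F) != 0 by rewrite oppr_eq0 oner_eq0.
rewrite (gauss_sum_mul (rho := phi)); first last.
- by move=> x x0; rewrite mulfK // expf_neq0 // (mult_char_neq0 omegaM).
- exact/mult_char_inv/mult_char_exp.
rewrite (bigD1 (-1)) //= subrr.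
under eq_bigr do rewrite mulr0 psi0 mulr1.
rewrite (sum_quad_char phi2) mulr0 add0r /twisted_jacobi_sum mulr_sumr.
apply: eq_bigr => v /andP [v0 v1]; have v1_neq0 : 1 + v != 0 by rewrite addrC addr_eq0.
by rewrite gauss_sum_scale // (quad_char_invr phi2 v1_neq0) mulrA mulrC.
Qed.

End GaussSum.

Definition hfactor (F : finFieldType) (y : F) : F := y + 2 + y^-1.

Section HfactorFibres.

Variable F : finFieldType.
Hypothesis oddF : odd #|F|.

Lemma four_neq0 : (4 : F) != 0.
Proof.
have -> : (4 : F) = 2 * 2 by rewrite -natrM.
by rewrite mulf_neq0 ?odd_card_two_neq0.
Qed.

Lemma hfactor_fiberE (y u : F) :
  (y != 0) && (hfactor y == u) = ((2 * y + (2 - u)) ^+ 2 == u * (u - 4)).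
Proof.
have [->|y0] /= := eqVneq y 0.
  rewrite mulr0 add0r -subr_eq0.
  have -> : (2 - u) ^+ 2 - u * (u - 4) = 4 by ring.
  by rewrite (negbTE four_neq0).
rewrite -[in RHS]subr_eq0.
have -> : (2 * y + (2 - u)) ^+ 2 - u * (u - 4) = 4 * y * (hfactor y - u).
  by rewrite /hfactor; field.
by rewrite !mulf_eq0 (negbTE four_neq0) (negbTE y0) subr_eq0.
Qed.

Lemma card_hfactor_fiber (phi : F -> algC) (u : F) : order2_char phi -> u != 0 ->
  (#|[set y : F | (y != 0) && (hfactor y == u)]|%:R : algC) =
  1 + (if u == 4 then 0 else phi (u * (u - 4))).
Proof.
move=> phi2 u0.
have -> : [set y : F | (y != 0) && (hfactor y == u)] =
          (fun y => 2 * y + (2 - u)) @^-1: [set z : F | z ^+ 2 == u * (u - 4)].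
  by apply/setP => y; rewrite !inE hfactor_fiberE.
rewrite card_preimset => [|y z /addIr]; last exact/mulfI/odd_card_two_neq0.
have [->|u4] := eqVneq u 4.
  have -> : [set z : F | z ^+ 2 == 4 * (4 - 4)] = [set 0].
    by apply/setP => z; rewrite !inE subrr mulr0 expf_eq0.
  by rewrite cards1 addr0.
by rewrite (card_sqrt phi2) // mulf_neq0 // subr_eq0.
Qed.

Lemma sum_quad_disc_char (omega phi : F -> algC) (m : nat) :
  mult_char omega -> order2_char phi ->
  \sum_(u : F | (u != 0) && (u != 4)) omega u ^+ m * phi (u * (u - 4)) =
  omega (-4) ^+ m * twisted_jacobi_sum omega phi m.
Proof.
move=> omegaM phi2; have m4_neq0 : (-4 : F) != 0 by rewrite oppr_eq0 four_neq0.
rewrite (reindex_inj (h := fun v => -4 * v^-1)); last first.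
  by move=> a b /(mulfI m4_neq0) /invr_inj.
rewrite /twisted_jacobi_sum mulr_sumr /=.
rewrite (eq_bigl (fun v => (v != 0) && (v != -1))) => [|v]; last first.
  rewrite mulf_eq0 invr_eq0 (negbTE m4_neq0) /=; have [->|v0] //= := eqVneq v 0.
  by rewrite -(inj_eq (mulIf v0)) mulfVK // -mulrN1 (inj_eq (mulfI four_neq0)) eq_sym.
apply: eq_bigr => v /andP [v0 v1]; have v1_neq0 : 1 + v != 0 by rewrite addrC addr_eq0.
have -> : -4 * v^-1 * (-4 * v^-1 - 4) = (4 * v^-1) ^+ 2 * (1 + v) by field.
rewrite (mult_charM omegaM) ?invr_neq0 // (mult_charV omegaM v0) exprMn exprVn.
rewrite (mult_charM (quad_char_mult phi2)) ?expf_neq0 ?mulf_neq0 ?invr_neq0 ?four_neq0 //.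
by rewrite (quad_char_sqr phi2) ?mulf_neq0 ?invr_neq0 ?four_neq0 // mul1r mulrA.
Qed.

Lemma sum_hfactor_char (omega phi : F -> algC) (m : nat) :
  char_generator omega -> order2_char phi -> (m < #|F|.-1)%N ->
  \sum_(y : F | (y != 0) && (hfactor y != 0)) omega (hfactor y) ^+ m =
  (m == 0)%N%:R * #|F|.-1%:R + omega (-4) ^+ m * twisted_jacobi_sum omega phi m.
Proof.
move=> omega_gen phi2 m_lt; have omegaM := char_generator_mult omega_gen.
rewrite -(sum_char_generator_units omega_gen m_lt) -(sum_quad_disc_char m omegaM phi2).
rewrite (partition_big (@hfactor F) (fun u => u != 0)) => [|y /andP []] //=.
rewrite big_mkcondr -big_split /=; apply: eq_bigr => u u0.
rewrite (eq_big (fun y => y \in [set y : F | (y != 0) && (hfactor y == u)])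
                (fun _ => omega u ^+ m))
  => [|y|y /andP [_ /eqP ->]] //; last first.
  by rewrite inE; case: (eqVneq (hfactor y) u) => [->|]; rewrite ?u0 ?andbT ?andbF.
rewrite sumr_const -[_ *+ #|_|]mulr_natr (card_hfactor_fiber phi2 u0) mulrDr mulr1.
by case: (eqVneq u 4) => /=; rewrite ?mulr0 ?addr0.
Qed.

End HfactorFibres.

Lemma card_set_natr (R : pzSemiRingType) (T : finType) (P : pred T) :
  (#|[set x : T | P x]|%:R : R) = \sum_(x : T) (P x)%:R.
Proof.
rewrite -sum1_card natr_sum big_mkcond /=; apply: eq_bigr => x _.
by rewrite inE; case: (P x).
Qed.

Section ProductEquation.

Variables (F : finFieldType) (omega : F -> algC).
Hypothesis omega_gen : char_generator omega.
Variables (d : nat) (D : pred F) (h : F -> F) (b : F).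
Hypothesis b0 : b != 0.

Lemma prod_eq_indicator (x : {ffun 'I_d -> F}) :
  (([forall i, D (x i)] && (\prod_(i < d) h (x i) == b))%:R : algC) =
  #|F|.-1%:R^-1 * \sum_(m < #|F|.-1) omega b^-1 ^+ m *
     \prod_(i < d) (if D (x i) && (h (x i) != 0) then omega (h (x i)) ^+ m else 0).
Proof.
have omegaM := char_generator_mult omega_gen.
have q1_neq0 : (#|F|.-1%:R : algC) != 0 by rewrite pnatr_eq0 -lt0n card_finField_pred_gt0.
have [/forallP x_good|/forallPn [i x_bad]] :=
  boolP [forall i, D (x i) && (h (x i) != 0)]; last first.
  rewrite [in RHS]big1 ?mulr0; last by move=> m _; rewrite (bigD1 i) //= (negbTE x_bad) mul0r mulr0.
  case/nandP: x_bad => [Dxi|/negbNE/eqP hxi0].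
    by rewrite (introF forallP) // => /(_ i); rewrite (negbTE Dxi).
  by rewrite (bigD1 i) //= hxi0 mul0r eq_sym (negbTE b0) andbF.
have x_D : [forall i, D (x i)] by apply/forallP => i; case/andP: (x_good i).
have hx0 i : h (x i) != 0 by case/andP: (x_good i).
have prod_hx0 : \prod_(i < d) h (x i) != 0 by apply/prodf_neq0 => i _.
rewrite (eq_bigr (fun m : 'I_#|F|.-1 => omega (b^-1 * \prod_(i < d) h (x i)) ^+ m)).
  rewrite sum_char_generator_exp ?mulf_neq0 ?invr_neq0 // mulrCA mulVf // mulr1 x_D /=.
  by rewrite -(inj_eq (mulfI (invr_neq0 b0))) mulVf.
move=> m _; rewrite (eq_bigr (fun i => omega (h (x i)) ^+ m)) => [|i _]; last by rewrite x_good.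
by rewrite prodrXl -(mult_char_prod omegaM hx0) -exprMn -(mult_charM omegaM) ?invr_neq0.
Qed.

Lemma card_prod_eq_char_sum :
  (#|[set x : {ffun 'I_d -> F} | [forall i, D (x i)] && (\prod_(i < d) h (x i) == b)]|%:R
    : algC) =
  #|F|.-1%:R^-1 * \sum_(m < #|F|.-1) omega b^-1 ^+ m *
     (\sum_(y | D y && (h y != 0)) omega (h y) ^+ m) ^+ d.
Proof.
rewrite card_set_natr (eq_bigr _ (fun x _ => prod_eq_indicator x)) -mulr_sumr.
congr (_ * _); rewrite exchange_big /=; apply: eq_bigr => m _; rewrite -mulr_sumr.
congr (_ * _); rewrite [in RHS]big_mkcond /= -[in RHS](card_ord d) -prodr_const.
by rewrite bigA_distr_bigA.
Qed.

End ProductEquation.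

Lemma card_Xt_points (F : finFieldType) (d : nat) (t : F) (omega phi : F -> algC) :
  odd #|F| -> t != 0 -> char_generator omega -> order2_char phi ->
  (#|Xt_points d t|%:R : algC) = #|F|.-1%:R^-1 *
    ((#|F|%:R - 2) ^+ d - (-1) ^+ d +
     \sum_(m < #|F|.-1) twisted_jacobi_sum omega phi m ^+ d * omega ((-1) ^+ d * t) ^+ m).
Proof.
move=> oddF t0 omega_gen phi2; have omegaM := char_generator_mult omega_gen.
have four0 := four_neq0 oddF; have m4_neq0 : (-4 : F) != 0 by rewrite oppr_eq0.
have b0 : (4 ^+ d * t^-1 : F) != 0 by rewrite mulf_neq0 ?expf_neq0 ?invr_neq0.
have -> : Xt_points d t = [set x : {ffun 'I_d -> F} | [forall i, x i != 0] &&
    (\prod_(i < d) hfactor (x i) == 4 ^+ d * t^-1)] by [].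
rewrite (card_prod_eq_char_sum omega_gen d (fun y => y != 0) (@hfactor F) b0).
congr (_ * _); under eq_bigr => m _ do rewrite (sum_hfactor_char oddF omega_gen phi2 (ltn_ord m)).
pose m0 : 'I_#|F|.-1 := Ordinal (card_finField_pred_gt0 F).
rewrite (bigD1 m0) 1?[in RHS](bigD1 m0) /=; [|by []..].
rewrite !expr0 (twisted_jacobi_sum0 _ phi2) !mul1r mulr1 addrA subrK.
congr (_ + _).
  by congr (_ ^+ _); rewrite natr_card_pred; ring.
apply: eq_bigr => m m_neq0.
have -> : (nat_of_ord m == 0)%N = false.
  by apply: contraNF m_neq0 => /eqP m_eq0; apply/eqP/val_inj.
rewrite mul0r add0r exprMn mulrA mulrC; congr (_ * _).
rewrite -exprM mulnC exprM -exprMn; congr (_ ^+ _).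
rewrite -(mult_charX omegaM _ m4_neq0) -(mult_charM omegaM) ?invr_neq0 ?expf_neq0 //.
have -> : (-4 : F) ^+ d = (-1) ^+ d * 4 ^+ d by rewrite -exprMn mulN1r.
by congr (omega _); field; rewrite t0 expf_neq0.
Qed.

Lemma HqE (F : finFieldType) (p d : nat) (zeta : algC) (omega phi : F -> algC) (t : F) :
  p \in [pchar F] -> p.-primitive_root zeta -> mult_char omega -> order2_char phi ->
  Hq p zeta omega phi d t = (-1) ^+ d / (1 - #|F|%:R) *
    \sum_(m < #|F|.-1) twisted_jacobi_sum omega phi m ^+ d * omega ((-1) ^+ d * t) ^+ m.
Proof.
move=> pF zeta_prim omegaM phi2; rewrite /Hq; congr (_ * _); apply: eq_bigr => m _.
rewrite (gauss_sum_twisted_jacobi pF zeta_prim _ omegaM phi2) [gauss_sum _ _ phi * _]mulrC mulfK //.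
exact: gauss_sum_quad_neq0.
Qed.

Theorem theorem4p1 (F : finFieldType) (p d : nat) (t : F)
    (omega phi : F -> algC) (zeta : algC) :
  odd #|F| -> p \in [pchar F] -> (2 <= d)%N -> t != 0 ->
  char_generator omega -> order2_char phi ->
  p.-primitive_root zeta ->
  (#|Xt_points d t|%:R : algC) =
    ((#|F|%:R - 2) ^+ d - (-1) ^+ d) / (#|F|%:R - 1)
    - (-1) ^+ d * Hq p zeta omega phi d t.
Proof.
move=> oddF pF _ t0 omega_gen phi2 zeta_prim.
rewrite (card_Xt_points d oddF t0 omega_gen phi2) natr_card_pred.
rewrite (HqE d t pF zeta_prim (char_generator_mult omega_gen) phi2).
have sign_sqr : (-1) ^+ d * (-1) ^+ d = 1 :> algC by rewrite -exprMn mulrNN mulr1 expr1n.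
have q1_neq0 : (#|F|%:R - 1 : algC) != 0.
  by rewrite -natr_card_pred pnatr_eq0 -lt0n card_finField_pred_gt0.
by rewrite !mulrA sign_sqr mul1r; field; rewrite -opprB oppr_eq0 q1_neq0.
Qed.
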